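(* Let $\Gamma$ be a countable simplicial graph (no loops or multiple edges) and for each vertex $v\in V(\Gamma)$ let $G_v$ be a finitely generated group with a finite generating set $S_v=S_v^{-1}$ not containing the identity. Fix an injective map $\bar w:V(\Gamma)\to\{1,2,3,\dots\}$ (a one-to-one correspondence with $\mathbb{N}$ when $\Gamma$ is infinite) and equip the graph product $\Gamma\mathfrak{G}$ with the left-invariant metric $d(g,h)=\|g^{-1}h\|$, where $\|\gamma\|=\inf\{\sum_i w(s_i)\mid \gamma=s_1\cdots s_m,\ s_i\in\bigsqcup_v S_v\}$ (and $\|e\|=0$), with $w(s)=\bar w(v)$ for $s\in S_v$. Let $r>0$, let $\Gamma_r$ be the full subgraph of $\Gamma$ on the vertex set $\bar w^{-1}([0,r])$, and let $\Gamma_r\mathfrak{G}$ be the subgroup of $\Gamma\mathfrak{G}$ generated by the $G_v$ with $v\in V(\Gamma_r)$. Then every element of $\Gamma\mathfrak{G}$ can be written in the form $xb$ with $x$ permissible and $b\in\Gamma_r\mathfrak{G}$. Moreover, if $x\neq x'$ are permissible, then $d(xb,x'b')>r$ for all $b,b'\in\Gamma_r\mathfrak{G}$.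
   Context: The graph product $\Gamma\mathfrak{G}$ of groups $\{G_v\}_{v\in V(\Gamma)}$ is the free product of the $G_v$ modulo the relations $gg'=g'g$ for all $g\in G_v$, $g'\in G_{v'}$ whenever $\{v,v'\}$ is an edge of $\Gamma$. An expression $g=g_1\cdots g_\ell$ is an expression in syllables if each $g_i$ is non-trivial and lies in a single vertex group, and no two consecutive $g_i,g_{i+1}$ lie in the same vertex group. An element $x\in\Gamma\mathfrak{G}$ is called permissible (with respect to $\Gamma_r$) if no reduced word in syllables presenting $x$ ends with a non-trivial syllable belonging to $\Gamma_r\mathfrak{G}$ (i.e. to a vertex group $G_v$ with $v\in V(\Gamma_r)$); the identity is considered permissible. *)

From Stdlib Require Import Relations.
From Stdlib Require List.
From mathcomp Require Import all_boot all_order all_algebra.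
From mathcomp Require Import reals.
Set Implicit Arguments. Unset Strict Implicit. Unset Printing Implicit Defensive.
Import Order.TTheory GRing.Theory Num.Theory.

Record group := Group {
  gcar :> Type;
  gmul : gcar -> gcar -> gcar;
  gone : gcar;
  ginv : gcar -> gcar;
  gmulA : associative gmul;
  gmul1 : left_id gone gmul;
  gmulV : left_inverse gone ginv gmul }.

Section GraphProduct.
Variables (V : countType) (adj : rel V) (G : V -> group).

Definition letter := {v : V & G v}.
Definition word := seq letter.

Inductive gp_step : word -> word -> Prop :=
| gp_del1 (u u' : word) (v : V) :
    gp_step (u ++ existT _ v (gone (G v)) :: u') (u ++ u')
| gp_merge (u u' : word) (v : V) (g h : G v) :
    gp_step (u ++ existT _ v g :: existT _ v h :: u')
            (u ++ existT _ v (gmul g h) :: u')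
| gp_comm (u u' : word) (v v' : V) (g : G v) (h : G v') :
    adj v v' ->
    gp_step (u ++ existT _ v g :: existT _ v' h :: u')
            (u ++ existT _ v' h :: existT _ v g :: u').

Definition gp_eq : word -> word -> Prop := clos_refl_sym_trans word gp_step.

Definition wmul (x y : word) : word := x ++ y.
Definition winv (x : word) : word :=
  rev (map (fun s : letter => existT _ (projT1 s) (ginv (projT2 s))) x).

Fixpoint syllable_adj (w : word) : Prop :=
  match w with
  | s :: ((s' :: _) as w') => projT1 s <> projT1 s' /\ syllable_adj w'
  | _ => True
  end.
Definition in_syllables (w : word) : Prop :=
  (forall s, List.In s w -> projT2 s <> gone (G (projT1 s))) /\ syllable_adj w.

Definition reduced (w : word) : Prop :=
  in_syllables w /\ forall w', gp_eq w w' -> (size w <= size w')%N.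

Variables (R : realType) (wbar : V -> nat) (r : R).

Definition in_Gamma_r (v : V) : Prop := ((wbar v)%:R <= r)%R.

Definition permissible (x : word) : Prop :=
  forall (w0 : word) (s : letter),
    gp_eq x (rcons w0 s) -> reduced (rcons w0 s) -> ~ in_Gamma_r (projT1 s).

Definition in_sub_r (b : word) : Prop :=
  exists w : word, gp_eq b w /\ forall s, List.In s w -> in_Gamma_r (projT1 s).

Variable S : forall v, seq (G v).

Definition gen_word (u : word) : Prop :=
  forall s, List.In s u -> List.In (projT2 s) (S (projT1 s)).
Definition gen_weight (u : word) : nat := sumn (map (fun s : letter => wbar (projT1 s)) u).

(* ||gamma|| > t : the infimum of the weights of all expressions of gamma
   as a product of generators exceeds t (weights are natural numbers, so
   the infimum is attained and this is equivalent to every expression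
   having weight > t) *)
Definition norm_gt (gamma : word) (t : R) : Prop :=
  forall u, gen_word u -> gp_eq gamma u -> (t < (gen_weight u)%:R)%R.

Definition dist_gt (g h : word) (t : R) : Prop := norm_gt (wmul (winv g) h) t.

End GraphProduct.

From Stdlib Require Import Relations.
From Stdlib Require List.
From Stdlib Require Import ClassicalEpsilon FunctionalExtensionality Classical.
From mathcomp Require Import all_boot all_order all_algebra.
From mathcomp Require Import reals.
Import Order.TTheory GRing.Theory Num.Theory.
Set Implicit Arguments. Unset Strict Implicit. Unset Printing Implicit Defensive.

(* The argument rests on a normal form for the graph product, obtained by
   piling letters as in Cartier-Foata heaps. A stack of letters is seen as one
   column per vertex u, recording from the top down every letter whose vertex
   is not adjacent to u. A word is read letter by letter; each letter falls
   onto the columns it meets and is merged with the letter of its own vertex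
   group lying on top of its column (both disappear if the product is
   trivial), or else is pushed on top. The pile obtained is invariant under
   the defining relations, determines the element, and its stack spells a
   reduced word.

   For permissible x no vertex of Gamma_r carries a letter on top of its
   column, since such a letter could be moved to the end of a reduced word for
   x. Right multiplication by letters of Gamma_r therefore only stacks letters
   of Gamma_r above the pile of x, and if the product is permissible again
   nothing has been stacked, so it equals x. A product of generators of weight
   at most r involves only generators of Gamma_r, hence distinct permissible
   cosets are more than r apart. The decomposition x b is found by moving a
   final Gamma_r-syllable of a reduced word for x into b, which shortens x. *)

(** * Groups and words *)

Section GroupFacts.
Variable H : group.
Local Notation "x * y" := (gmul x y).
Local Notation "1" := (gone H).

Lemma gmulgV (x : H) : x * ginv x = 1.
Proof.
set y := x * ginv x.
have yy : y * y = y by rewrite /y gmulA -(gmulA x (ginv x)) gmulV -gmulA gmul1.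
by rewrite -(gmul1 y) -{1}(gmulV y) -gmulA yy gmulV.
Qed.

Lemma gmulg1 (x : H) : x * 1 = x.
Proof. by rewrite -(gmulV x) gmulA gmulgV gmul1. Qed.

Lemma ginv_uniq (x y : H) : x * y = 1 -> y = ginv x.
Proof. by move=> e; rewrite -(gmulg1 (ginv x)) -e gmulA gmulV gmul1. Qed.

Lemma ginv1 : ginv 1 = 1.
Proof. by symmetry; apply: ginv_uniq; exact: gmul1. Qed.

Lemma ginvM (x y : H) : ginv (x * y) = ginv y * ginv x.
Proof. by symmetry; apply: ginv_uniq; rewrite gmulA -(gmulA x) gmulgV gmulg1 gmulgV. Qed.

End GroupFacts.

Lemma allP_In (T : Type) (p : pred T) (s : seq T) :
  reflect (forall x, List.In x s -> p x) (all p s).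
Proof.
elim: s => [|y s IH] /=; first by left.
apply: (iffP andP) => [[py /IH ps] x [<-|/ps]//|ps].
by split; [apply: ps; left | apply/IH => x hx; apply: ps; right].
Qed.

Lemma In_split (T : Type) (x : T) (s : seq T) :
  List.In x s -> exists u u', s = u ++ x :: u'.
Proof.
elim: s => [|y s IH] //= [<-|/IH [u [u' ->]]]; first by exists [::], s.
by exists (y :: u), u'.
Qed.

Section Words.
Variables (V : countType) (adj : rel V) (G : V -> group).
Hypotheses (adj_sym : symmetric adj) (adj_irr : irreflexive adj).

Local Notation L := (letter G).
Local Notation W := (word G).
Local Notation eqw := (gp_eq adj).

Definition vtx (l : L) : V := projT1 l.
Definition all_adj (v : V) (c : W) : bool := all (fun l => adj (vtx l) v) c.

Lemma eqw_refl (x : W) : eqw x x. Proof. exact: rst_refl. Qed.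
Lemma eqw_sym (x y : W) : eqw x y -> eqw y x. Proof. exact: rst_sym. Qed.
Lemma eqw_trans (x y z : W) : eqw x y -> eqw y z -> eqw x z. Proof. exact: rst_trans. Qed.
Lemma eqw_step (x y : W) : gp_step adj x y -> eqw x y. Proof. exact: rst_step. Qed.

Lemma eqw_invariant (T : Type) (f : W -> T) :
  (forall a b, gp_step adj a b -> f a = f b) -> forall a b, eqw a b -> f a = f b.
Proof. by move=> hf a b; elim=> [{}a {}b /hf|//|{}a {}b _ ->|{}a {}b c _ -> _ ->]. Qed.

Lemma eqw_compat (f : W -> W) :
  (forall a b, gp_step adj a b -> eqw (f a) (f b)) -> forall a b, eqw a b -> eqw (f a) (f b).
Proof.
move=> hf a b; elim=> [{}a {}b /hf //|{}a|{}a {}b _|{}a {}b c _ IH _].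
- exact: eqw_refl.
- exact: eqw_sym.
- exact: eqw_trans IH.
Qed.

Lemma eqw_catl (p a b : W) : eqw a b -> eqw (p ++ a) (p ++ b).
Proof.
move: a b; apply: (@eqw_compat (cat p)) => a b.
by case=> [u u' v|u u' v g h|u u' v v' g h e]; apply: eqw_step; rewrite !catA; constructor.
Qed.

Lemma eqw_catr (q a b : W) : eqw a b -> eqw (a ++ q) (b ++ q).
Proof.
move: a b; apply: (@eqw_compat (cat^~ q)) => a b.
by case=> [u u' v|u u' v g h|u u' v v' g h e]; apply: eqw_step; rewrite -!catA; constructor.
Qed.

Lemma eqw_cat (a b c d : W) : eqw a b -> eqw c d -> eqw (a ++ c) (b ++ d).
Proof. by move=> h1 h2; apply: eqw_trans (eqw_catr c h1) (eqw_catl b h2). Qed.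

Lemma eqw_slide (k : L) (c : W) : all_adj (vtx k) c -> eqw (k :: c) (c ++ [:: k]).
Proof.
elim: c => [|p c IH] /=; first by move=> _; exact: eqw_refl.
case/andP=> hp /IH hc; apply: eqw_trans (eqw_catl [:: p] hc).
apply: eqw_step; case: k p hp {IH hc} => [v g] [v' h] hp.
by apply: (@gp_comm _ _ _ [::]); rewrite adj_sym.
Qed.

Lemma eqw_rev_slide (k : L) (b a : W) :
  all_adj (vtx k) b -> eqw (rev (b ++ k :: a)) (rev (k :: b ++ a)).
Proof.
move=> hb; rewrite rev_cat rev_cons cat_rcons rev_cons rev_cat rcons_cat -cats1.
by apply: eqw_catl; apply: eqw_slide; rewrite /all_adj all_rev.
Qed.

Definition linv (s : L) : L := existT _ (projT1 s) (ginv (projT2 s)).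

Lemma winv_cat (a b : W) : winv (a ++ b) = winv b ++ winv a.
Proof. by rewrite /winv map_cat rev_cat. Qed.

Lemma winv_cons (a : L) (b : W) : winv (a :: b) = winv b ++ [:: linv a].
Proof. by rewrite /winv /= rev_cons cats1. Qed.

Lemma all_winv (P : pred V) (x : W) :
  all (fun l => P (vtx l)) (winv x) = all (fun l => P (vtx l)) x.
Proof. by rewrite /winv all_rev all_map. Qed.

Lemma eqw_winv (x y : W) : eqw x y -> eqw (winv x) (winv y).
Proof.
move: x y; apply: (@eqw_compat (@winv _ _)) => x y.
case=> [u u' v|u u' v g h|u u' v v' g h e];
  rewrite !winv_cat !winv_cons -!catA /= /linv /=; apply: eqw_step.
- by rewrite ginv1; constructor.
- by rewrite ginvM; constructor.
- by constructor; rewrite adj_sym.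
Qed.

Lemma eqw_cat_winv (x : W) : eqw (x ++ winv x) [::].
Proof.
elim: x => [|[v g] x IH]; first exact: eqw_refl.
rewrite winv_cons catA /=.
apply: eqw_trans (eqw_catl [:: existT _ v g] (eqw_catr _ IH)) _ => /=.
apply: eqw_trans (_ : eqw [:: existT _ v (gone (G v))] _); apply: eqw_step.
  by rewrite -(gmulgV g); apply: (@gp_merge _ _ _ [::] [::]).
exact: (@gp_del1 _ _ _ [::] [::]).
Qed.

Lemma eqw_cancel (y z u : W) : eqw (winv y ++ z) u -> eqw (y ++ u) z.
Proof.
move=> e; apply: eqw_trans (eqw_catl y (eqw_sym e)) _; rewrite catA.
exact: eqw_catr (eqw_cat_winv y).
Qed.

(** * Piles *)

Definition trivial_letter (l : L) : bool :=
  if excluded_middle_informative (projT2 l = gone (G (projT1 l))) then true else false.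

Lemma trivial_letterP (l : L) : reflect (projT2 l = gone (G (projT1 l))) (trivial_letter l).
Proof. by rewrite /trivial_letter; case: excluded_middle_informative => h; constructor. Qed.

Lemma trivial_letter1 (v : V) : trivial_letter (existT _ v (gone (G v))).
Proof. exact/trivial_letterP. Qed.

(* When the vertices differ, [merge k l] is just [l]. *)
Definition merge (k l : L) : L :=
  let: existT vk a := k in let: existT v h := l in
  if vk =P v is ReflectT e then existT _ v (gmul (eq_rect vk (fun x => gcar (G x)) a v e) h)
  else l.

Lemma mergeE (v : V) (a h : G v) : merge (existT _ v a) (existT _ v h) = existT _ v (gmul a h).
Proof. by rewrite /merge; case: eqP => // e; rewrite (eq_irrelevance e erefl). Qed.

Lemma vtx_merge (k l : L) : vtx (merge k l) = vtx l.
Proof. by case: k l => [vk a] [v h] /=; case: eqP. Qed.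

(* A stack lists letters topmost first, so it spells the word [rev st]. The
   column of u records, from the top down, each stacked letter whose vertex is
   not adjacent to u: as [Some l] if it lies in G_u, as a blocking [None]
   otherwise. *)
Definition entry (l : L) (u : V) : option L := if vtx l == u then Some l else None.

Fixpoint col (u : V) (st : seq L) : seq (option L) :=
  if st is l :: st' then (if adj (vtx l) u then col u st' else entry l u :: col u st')
  else [::].

Definition columns := V -> seq (option L).
Definition pile (st : seq L) : columns := fun u => col u st.
Definition top_at (v : V) (s : columns) : bool := if s v is Some _ :: _ then true else false.

Lemma col_cat (u : V) (a b : seq L) : col u (a ++ b) = col u a ++ col u b.
Proof. by elim: a => //= p a ->; case: ifP. Qed.

Lemma col_all_adj (v : V) (b : seq L) : all_adj v b -> col v b = [::].
Proof. by elim: b => //= p b IH /andP [-> /IH]. Qed.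

Lemma top_at_cat_adj (v : V) (b a : seq L) :
  all_adj v b -> top_at v (pile (b ++ a)) = top_at v (pile a).
Proof. by move=> hb; rewrite /top_at /pile col_cat col_all_adj. Qed.

Lemma col_skip (u : V) (k : L) (b a : seq L) :
  adj (vtx k) u -> col u (b ++ k :: a) = col u (b ++ a).
Proof. by move=> h; rewrite !col_cat /= h. Qed.

Lemma pile_cons_top (k : L) (s : seq L) : pile (k :: s) (vtx k) = Some k :: pile s (vtx k).
Proof. by rewrite /pile /= adj_irr /entry eqxx. Qed.

Lemma pile_cons_inj (k : L) (s1 s2 : seq L) : pile (k :: s1) = pile (k :: s2) -> pile s1 = pile s2.
Proof.
move=> e; apply: functional_extensionality => u.
by have := congr1 (fun s => s u) e; rewrite /pile /=; case: ifP => // _ [].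
Qed.

Lemma pile_slide (k : L) (b a : seq L) :
  all_adj (vtx k) b -> pile (b ++ k :: a) = pile (k :: b ++ a).
Proof.
move=> hb; apply: functional_extensionality => u; rewrite /pile.
elim: b hb => [|p b IH] //= /andP [hp /IH ->] /=.
case: (boolP (adj (vtx k) u)) => hku; case: (boolP (adj (vtx p) u)) => hpu //=.
have ek : entry k u = None.
  by rewrite /entry; case: eqP => // eku; move: hp; rewrite eku (negbTE hpu).
have ep : entry p u = None.
  by rewrite /entry; case: eqP => // epu; move: hku; rewrite -epu adj_sym hp.
by rewrite ek ep.
Qed.

Lemma pile_top_inv (st : seq L) (v : V) (k : L) rest : pile st v = Some k :: rest ->
  exists b a, [/\ st = b ++ k :: a, all_adj v b & vtx k = v].
Proof.
rewrite /pile; elim: st rest => //= p st IH rest.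
case: ifP => hp.
  by case/IH=> b [a [-> hb hk]]; exists (p :: b), a; rewrite /all_adj /= hp.
by rewrite /entry; case: eqP => // <- [<- _]; exists [::], st.
Qed.

Lemma top_at_cat_inv (v : V) (st d : seq L) : ~~ top_at v (pile st) -> top_at v (pile (d ++ st)) ->
  exists k b a, [/\ d = b ++ k :: a, all_adj v b & vtx k = v].
Proof.
rewrite /top_at /pile col_cat; case E: (col v d) => [|[k|] rest] //=; first by move/negbTE->.
by move=> _ _; have [b [a]] := pile_top_inv (E : pile d v = _); exists k, b, a.
Qed.

Fixpoint proper_stack (st : seq L) : bool :=
  if st is l :: st' then
    [&& ~~ trivial_letter l, ~~ top_at (vtx l) (pile st') & proper_stack st']
  else true.

Lemma proper_stack_drop (b s : seq L) : proper_stack (b ++ s) -> proper_stack s.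
Proof. by elim: b => //= p b IH /and3P [_ _ /IH]. Qed.

Lemma proper_stack_pop (b : seq L) (k : L) (a : seq L) :
  all_adj (vtx k) b -> proper_stack (b ++ k :: a) -> proper_stack (b ++ a).
Proof.
elim: b => [|p b IH] /=; first by move=> _ /and3P [].
case/andP=> hp hb /and3P [np tp /(IH hb) pb]; rewrite np pb andbT.
have hkp : adj (vtx k) (vtx p) by rewrite adj_sym.
by move: tp; rewrite /top_at /pile col_skip.
Qed.

Inductive mode := Keep | Push | Pop | Replace of L.

Definition mode_of (s : columns) (l : L) : mode :=
  if trivial_letter l then Keep else
  if s (vtx l) is Some k :: _ then
    (if trivial_letter (merge k l) then Pop else Replace (merge k l))
  else Push.

Definition update (m : mode) (l : L) (u : V) (c : seq (option L)) : seq (option L) :=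
  match m with
  | Keep => c
  | Push => entry l u :: c
  | Pop => behead c
  | Replace kl => if u == vtx l then Some kl :: behead c else c
  end.

Definition act (s : columns) (l : L) : columns :=
  fun u => if adj (vtx l) u then s u else update (mode_of s l) l u (s u).

Definition pile_of (w : W) : columns := foldl act (fun=> [::]) w.

Lemma act_trivial (s : columns) (l : L) : trivial_letter l -> act s l = s.
Proof.
move=> tl; apply: functional_extensionality => u.
by rewrite /act /mode_of tl; case: ifP.
Qed.

Lemma act_push (st : seq L) (l : L) : ~~ trivial_letter l -> ~~ top_at (vtx l) (pile st) ->
  act (pile st) l = pile (l :: st).
Proof.
move=> /negbTE tl nt; suff hm : mode_of (pile st) l = Push by rewrite /act hm.
by move: nt; rewrite /mode_of tl /top_at; case: (pile st (vtx l)) => [|[]].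
Qed.

Lemma act_cons (k : L) (s : seq L) (l : L) : ~~ trivial_letter l -> vtx k = vtx l ->
  act (pile (k :: s)) l =
  if trivial_letter (merge k l) then pile s else pile (merge k l :: s).
Proof.
move=> /negbTE tl hk.
have hm : mode_of (pile (k :: s)) l =
    if trivial_letter (merge k l) then Pop else Replace (merge k l).
  by rewrite /mode_of tl -hk pile_cons_top.
apply: functional_extensionality => u; rewrite /act hm /pile /= /entry hk vtx_merge.
case: trivial_letter => /=; case: (boolP (adj (vtx l) u)) => //= hu.
by case: (vtx l =P u) => [->|/eqP ne]; rewrite ?eqxx // eq_sym (negbTE ne).
Qed.

Definition update_blocked (m : mode) (c : seq (option L)) : seq (option L) :=
  match m with Push => None :: c | Pop => behead c | _ => c end.

Lemma update_blocked_eq (m : mode) (l : L) (u : V) c :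
  u != vtx l -> update m l u c = update_blocked m c.
Proof.
move=> /negbTE ne; case: m => //= [|kl]; first by rewrite /entry eq_sym ne.
by rewrite ne.
Qed.

Lemma update_blocked_comm (m1 m2 : mode) c :
  (m1 = Pop \/ m2 = Pop -> c = None :: behead c) ->
  update_blocked m1 (update_blocked m2 c) = update_blocked m2 (update_blocked m1 c).
Proof.
case: m1 => [||| ?]; case: m2 => [||| ?] //= hc.
- by rewrite {2}hc; auto.
- by rewrite {1}hc; auto.
Qed.

Lemma mode_of_ext (s1 s2 : columns) (l : L) :
  s1 (vtx l) = s2 (vtx l) -> mode_of s1 l = mode_of s2 l.
Proof. by rewrite /mode_of => ->. Qed.

(* The letter removed by a Pop blocks every other column it meets with a
   [None], so Pops and Pushes commute on such columns. *)
Lemma mode_of_pop (st : seq L) (l : L) (u : V) : mode_of (pile st) l = Pop ->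
  ~~ adj (vtx l) u -> u != vtx l -> pile st u = None :: behead (pile st u).
Proof.
rewrite /mode_of; case: trivial_letter => //.
case E: (pile st (vtx l)) => [|[k|] rest] // _ hu /negbTE ne.
have [b [a [-> hb hk]]] := pile_top_inv E.
by rewrite pile_slide ?hk // /pile /= /entry hk (negbTE hu) eq_sym ne.
Qed.

Lemma act_comm (st : seq L) (l1 l2 : L) : adj (vtx l1) (vtx l2) ->
  act (act (pile st) l1) l2 = act (act (pile st) l2) l1.
Proof.
move=> h12.
have e1 : mode_of (act (pile st) l2) l1 = mode_of (pile st) l1.
  by apply: mode_of_ext; rewrite /act adj_sym h12.
have e2 : mode_of (act (pile st) l1) l2 = mode_of (pile st) l2.
  by apply: mode_of_ext; rewrite /act h12.
apply: functional_extensionality => u; rewrite /act e1 e2.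
case: (boolP (adj (vtx l1) u)) => h1; case: (boolP (adj (vtx l2) u)) => h2 //=.
have n1 : u != vtx l1 by apply: contraNneq h2 => ->; rewrite adj_sym.
have n2 : u != vtx l2 by apply: contraNneq h1 => ->.
rewrite !update_blocked_eq //; apply: update_blocked_comm.
by case=> /mode_of_pop; apply.
Qed.

(* Every proper stack is [top_stack t x] with a free column of v in t
   (proper_stack_top), and reading a letter of G_v then only multiplies x
   (act_top_stack). *)
Definition top_stack (t : seq L) (v : V) (x : G v) : seq L :=
  if trivial_letter (existT _ v x) then t else existT _ v x :: t.

Lemma size_top_stack (t : seq L) (v : V) (x : G v) :
  size t <= size (top_stack t x) <= (size t).+1.
Proof. by rewrite /top_stack; case: ifP => _ /=; rewrite ?leqnSn ?leqnn. Qed.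

Lemma proper_top_stack (t : seq L) (v : V) (x : G v) :
  proper_stack t -> ~~ top_at v (pile t) -> proper_stack (top_stack t x).
Proof. by move=> pt nt; rewrite /top_stack; case: ifP => //= ->; rewrite nt pt. Qed.

Lemma eqw_rev_top_stack (t : seq L) (v : V) (x : G v) :
  eqw (rev (top_stack t x)) (rev t ++ [:: existT _ v x]).
Proof.
rewrite /top_stack; case: trivial_letterP => /= [->|_].
  by apply: eqw_sym; apply: eqw_step; rewrite -{2}(cats0 (rev t)); constructor.
by rewrite rev_cons -cats1; exact: eqw_refl.
Qed.

Lemma eqw_top_stack_mul (t : seq L) (v : V) (x h : G v) :
  eqw (rev (top_stack t x) ++ [:: existT _ v h]) (rev (top_stack t (gmul x h))).
Proof.
apply: eqw_trans (eqw_catr _ (eqw_rev_top_stack t x)) _; rewrite -catA /=.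
apply: eqw_trans (eqw_sym (eqw_rev_top_stack t (gmul x h))).
by apply: eqw_step; rewrite -(cats0 [:: _]) -!cat_cons; constructor.
Qed.

Lemma act_top_stack (t : seq L) (v : V) (x g : G v) : ~~ top_at v (pile t) ->
  act (pile (top_stack t x)) (existT _ v g) = pile (top_stack t (gmul x g)).
Proof.
move=> nt; case: (boolP (trivial_letter (existT _ v g))) => [/trivial_letterP /= ->|ng].
  by rewrite act_trivial ?gmulg1 ?trivial_letter1.
rewrite /top_stack; case: (boolP (trivial_letter (existT _ v x))) => [/trivial_letterP /= ->|nx].
  by rewrite gmul1 (negbTE ng) act_push.
by rewrite act_cons // mergeE; case: trivial_letter.
Qed.

Lemma proper_stack_top (st : seq L) (v : V) : proper_stack st -> exists t (x : G v),
  [/\ pile st = pile (top_stack t x), proper_stack t, ~~ top_at v (pile t),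
      eqw (rev st) (rev (top_stack t x)) & size (top_stack t x) = size st].
Proof.
move=> pst; case tv: (top_at v (pile st)); last first.
  exists st, (gone (G v)); rewrite /top_stack trivial_letter1 tv.
  by split=> //; exact: eqw_refl.
move: tv; rewrite {1}/top_at; case E: (pile st v) => [|[k|] rest] // _.
have [b [a [est hb hk]]] := pile_top_inv E.
case: k hk est {E} => vk x /= hk est; subst v.
have /and3P [nx nta _] : proper_stack (existT _ vk x :: a).
  by apply: (proper_stack_drop (b := b)); rewrite -est.
exists (b ++ a), x; rewrite /top_stack (negbTE nx); split.
- by rewrite est pile_slide.
- by apply: (@proper_stack_pop b (existT _ vk x)); rewrite -?est.
- by rewrite top_at_cat_adj.
- by rewrite est; exact: eqw_rev_slide.
- by rewrite est /= !size_cat /= addnS.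
Qed.

Lemma pile_of_spec (w : W) : exists st,
  [/\ proper_stack st, pile_of w = pile st, eqw w (rev st) & size st <= size w].
Proof.
elim/last_ind: w => [|w [v h] [st [pst e ew sz]]].
  by exists [::]; split=> //; exact: eqw_refl.
have [t [x [est pt nt ewt szt]]] := proper_stack_top v pst.
exists (top_stack t (gmul x h)); split.
- exact: proper_top_stack.
- by rewrite /pile_of foldl_rcons -/(pile_of w) e est act_top_stack.
- rewrite -cats1; apply: eqw_trans (eqw_top_stack_mul t x h).
  exact: eqw_catr (eqw_trans ew ewt).
- case/andP: (size_top_stack t x) => h1 _; case/andP: (size_top_stack t (gmul x h)) => _ h2.
  by rewrite size_rcons (leq_trans h2) // ltnS (leq_trans h1) // szt.
Qed.

Lemma act_merge (st : seq L) (v : V) (g h : G v) : proper_stack st ->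
  act (act (pile st) (existT _ v g)) (existT _ v h) = act (pile st) (existT _ v (gmul g h)).
Proof.
case/(proper_stack_top v) => t [x [-> _ nt _ _]].
by rewrite !act_top_stack // gmulA.
Qed.

Lemma pile_of_cat (u s : W) : pile_of (u ++ s) = foldl act (pile_of u) s.
Proof. exact: foldl_cat. Qed.

Lemma pile_of_eqw (w w' : W) : eqw w w' -> pile_of w = pile_of w'.
Proof.
move: w w'; apply: eqw_invariant => w w'.
case=> [u u' v|u u' v g h|u u' v v' g h hadj]; rewrite !pile_of_cat /=.
- by rewrite act_trivial ?trivial_letter1.
- by have [st [pst -> _ _]] := pile_of_spec u; rewrite act_merge.
- by have [st [_ -> _ _]] := pile_of_spec u; rewrite act_comm.
Qed.

Lemma pile_inj (st1 st2 : seq L) : pile st1 = pile st2 ->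
  eqw (rev st1) (rev st2) /\ size st1 = size st2.
Proof.
elim: st1 st2 => [|k a1 IH] st2 e.
  case: st2 e => [|l st2] e; first by split=> //; exact: eqw_refl.
  by have := congr1 (fun s => s (vtx l)) e; rewrite pile_cons_top.
have E : pile st2 (vtx k) = Some k :: pile a1 (vtx k) by rewrite -e pile_cons_top.
have [b [a [est hb _]]] := pile_top_inv E; subst st2.
have [ew sz] := IH _ (pile_cons_inj (etrans e (pile_slide a hb))).
split; last by rewrite /= sz !size_cat addnS.
apply: eqw_trans _ (eqw_sym (eqw_rev_slide a hb)).
by rewrite !rev_cons -!cats1; exact: eqw_catr.
Qed.

Lemma pile_of_inj (w1 w2 : W) : pile_of w1 = pile_of w2 -> eqw w1 w2.
Proof.
have [st1 [_ -> e1 _]] := pile_of_spec w1; have [st2 [_ -> e2 _]] := pile_of_spec w2.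
case/pile_inj=> e _; apply: eqw_trans e1 _; exact: eqw_trans e (eqw_sym e2).
Qed.

Lemma pile_of_size (w : W) (st : seq L) : pile_of w = pile st -> size st <= size w.
Proof.
have [st' [_ -> _ sz]] := pile_of_spec w.
by case/pile_inj=> _ <-.
Qed.

Lemma act_above (P : pred V) (st : seq L) (c d : W) :
  (forall v, P v -> ~~ top_at v (pile st)) ->
  all (fun l => P (vtx l)) c -> all (fun l => P (vtx l)) d ->
  exists2 d', all (fun l => P (vtx l)) d' & foldl act (pile (d ++ st)) c = pile (d' ++ st).
Proof.
move=> nt; elim: c d => [|l c IH] d /=; first by exists d.
case/andP=> hl hc hd.
suff [d1 hd1 ->] : exists2 d1, all (fun l => P (vtx l)) d1 &
    act (pile (d ++ st)) l = pile (d1 ++ st) by exact: IH.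
case: (boolP (trivial_letter l)) => tl; first by exists d; rewrite ?act_trivial.
case: (boolP (top_at (vtx l) (pile (d ++ st)))) => tp; last first.
  by exists (l :: d); rewrite /= ?hl ?hd ?act_push.
have [k [b [a [ed hb hk]]]] := top_at_cat_inv (nt _ hl) tp; subst d.
have hs : pile ((b ++ k :: a) ++ st) = pile (k :: b ++ a ++ st).
  by rewrite -catA pile_slide ?hk.
move: hd; rewrite all_cat /= hk hl /= => /andP [hpb hpa].
rewrite hs act_cons //; case: ifP => _.
  by exists (b ++ a); rewrite ?all_cat ?hpb ?catA.
by exists (merge k l :: b ++ a); rewrite /= ?vtx_merge ?all_cat ?hl ?hpb ?catA.
Qed.

(** * Reduced words and permissible elements *)

Lemma syllable_adjP (w : W) :
  (forall u u' v (g h : G v), w <> u ++ existT _ v g :: existT _ v h :: u') ->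
  syllable_adj w.
Proof.
elim: w => [|[v g] w IH] //; case: w IH => [|[v' h] w] // IH nw; split => /=.
  by move=> evv; subst v'; apply: (nw [::] w v g h).
apply: IH => u u' v0 g0 h0 e; apply: (nw (existT _ v g :: u) u' v0 g0 h0).
by rewrite e.
Qed.

Lemma minimal_in_syllables (w : W) :
  (forall w', eqw w w' -> size w <= size w') -> in_syllables w.
Proof.
move=> hmin; split.
  move=> [v g] /= hin eg; have [u [u' ew]] := In_split hin; subst g w.
  suff : size (u ++ existT _ v (gone (G v)) :: u') <= size (u ++ u').
    by rewrite !size_cat /= addnS ltnn.
  by apply: hmin; apply: eqw_step; constructor.
apply: syllable_adjP => u u' v g h ew; subst w.
suff : size (u ++ existT _ v g :: existT _ v h :: u') <= size (u ++ existT _ v (gmul g h) :: u').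
  by rewrite !size_cat /= !addnS ltnn.
by apply: hmin; apply: eqw_step; constructor.
Qed.

Lemma reduced_rev (w : W) (st : seq L) :
  pile_of w = pile st -> eqw w (rev st) -> reduced adj (rev st).
Proof.
move=> e ew.
have hmin : forall w', eqw (rev st) w' -> size (rev st) <= size w'.
  move=> w' ew'; rewrite size_rev; apply: pile_of_size.
  by rewrite -(pile_of_eqw (eqw_trans ew ew')).
by split; [exact: minimal_in_syllables | exact: hmin].
Qed.

Lemma gen_weight_ge (wbar : V -> nat) (u : W) (l : L) :
  List.In l u -> wbar (vtx l) <= gen_weight wbar u.
Proof.
rewrite /gen_weight; elim: u => [|y u IH] //= [<-|/IH h]; first exact: leq_addr.
exact: leq_trans h (leq_addl _ _).
Qed.

Section Gamma_r.
Variables (R : realType) (wbar : V -> nat) (r : R).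

Let light (v : V) : bool := ((wbar v)%:R <= r)%R.

Lemma permissible_no_top (x : W) (v : V) :
  permissible adj wbar r x -> light v -> ~~ top_at v (pile_of x).
Proof.
move=> px hv; have [st [_ ex ew _]] := pile_of_spec x.
rewrite ex {1}/top_at; case E: (pile st v) => [|[k|] rest] //=; exfalso.
have [b [a [est hb hk]]] := pile_top_inv E.
have ex' : pile_of x = pile (k :: b ++ a) by rewrite ex est pile_slide ?hk.
have ew' : eqw x (rev (k :: b ++ a)).
  by apply: eqw_trans ew _; rewrite est; apply: eqw_rev_slide; rewrite hk.
apply: (px (rev (b ++ a)) k); rewrite -?rev_cons //; first exact: reduced_rev ex' ew'.
by rewrite -/(vtx k) hk.
Qed.

Lemma not_permissible_split (x : W) : ~ permissible adj wbar r x ->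
  exists w0 s, [/\ eqw x (rcons w0 s), size w0 < size x & light (vtx s)].
Proof.
move=> npx; have [w0 [s [ex [_ hmin] hs]]] : exists w0 s,
    [/\ eqw x (rcons w0 s), reduced adj (rcons w0 s) & light (vtx s)].
  apply: NNPP => none; apply: npx => w0 s ex red hs.
  by apply: none; exists w0, s.
exists w0, s; split=> //.
by have := hmin x (eqw_sym ex); rewrite size_rcons.
Qed.

Lemma in_sub_rP (b : W) :
  in_sub_r adj wbar r b <-> exists2 bw, eqw b bw & all (fun l => light (vtx l)) bw.
Proof.
by split=> [[bw [e /allP_In h]]|[bw e /allP_In h]]; exists bw.
Qed.

Lemma permissible_decomposition (x b : W) : in_sub_r adj wbar r b -> exists x' b',
  [/\ permissible adj wbar r x', in_sub_r adj wbar r b' & eqw (x ++ b) (x' ++ b')].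
Proof.
have [n] := ubnP (size x); elim: n x b => // n IH x b /ltnSE hx hb.
case: (classic (permissible adj wbar r x)) => px.
  by exists x, b; split=> //; exact: eqw_refl.
have [w0 [s [ex hw0 hs]]] := not_permissible_split px.
have hsb : in_sub_r adj wbar r (s :: b).
  case/in_sub_rP: hb => bw e hbw; apply/in_sub_rP; exists (s :: bw).
    exact: eqw_catl [:: s] _ _ e.
  by rewrite /= hs.
have [x' [b' [px' hb' e]]] := IH w0 (s :: b) (leq_trans hw0 hx) hsb.
exists x', b'; split=> //; apply: eqw_trans e; rewrite -cat_rcons; exact: eqw_catr.
Qed.

Lemma permissible_coset_eq (x x' c : W) :
  permissible adj wbar r x -> permissible adj wbar r x' ->
  all (fun l => light (vtx l)) c -> eqw (x ++ c) x' -> eqw x x'.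
Proof.
move=> px px' hc e.
have [st [_ ex _ _]] := pile_of_spec x.
have nt v : light v -> ~~ top_at v (pile st) by move/(permissible_no_top px); rewrite ex.
have [[|l d] hd ed] := act_above nt hc (isT : all _ [::]).
  by apply: pile_of_inj; rewrite -(pile_of_eqw e) pile_of_cat ex ed.
have ex' : pile_of x' = pile (l :: d ++ st).
  by rewrite -(pile_of_eqw e) pile_of_cat ex ed.
case/andP: hd => hl _.
by have := permissible_no_top px' hl; rewrite ex' /top_at pile_cons_top.
Qed.

Lemma light_word (u : W) :
  ((gen_weight wbar u)%:R <= r)%R -> all (fun l => light (vtx l)) u.
Proof.
by move=> hu; apply/allP_In => l /(gen_weight_ge wbar) hl; apply: le_trans hu; rewrite ler_nat.
Qed.

Lemma exists_permissible_decomposition (g : W) : exists x b : W,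
  permissible adj wbar r x /\ in_sub_r adj wbar r b /\ eqw g (wmul x b).
Proof.
have [|x [b [px hb e]]] := permissible_decomposition g (b := [::]).
  by apply/in_sub_rP; exists [::]; first exact: eqw_refl.
by exists x, b; rewrite cats0 in e.
Qed.

Lemma permissible_far (S : forall v, seq (G v)) (x x' b b' : W) :
  permissible adj wbar r x -> permissible adj wbar r x' -> ~ eqw x x' ->
  in_sub_r adj wbar r b -> in_sub_r adj wbar r b' ->
  dist_gt adj wbar S (wmul x b) (wmul x' b') r.
Proof.
move=> px px' nxx' /in_sub_rP [bw eb hbw] /in_sub_rP [bw' eb' hbw'] u _ eu.
rewrite ltNge; apply/negP => /light_word hu; apply: nxx'.
apply: (permissible_coset_eq (c := bw ++ u ++ winv bw')) px px' _ _.
  by rewrite !all_cat hbw hu all_winv.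
have e1 : eqw (x ++ bw ++ u ++ winv bw') (((x ++ b) ++ u) ++ winv b').
  rewrite -!catA; apply: eqw_catl; apply: eqw_cat (eqw_sym eb) _.
  exact: eqw_catl (eqw_winv (eqw_sym eb')).
apply: eqw_trans e1 _; apply: eqw_trans (eqw_catr _ (eqw_cancel eu)) _.
by rewrite -catA -[X in eqw _ X]cats0; apply: eqw_catl; exact: eqw_cat_winv.
Qed.

End Gamma_r.
End Words.

Unset Implicit Arguments.
Local Open Scope ring_scope.

Theorem lemma3p1
  (V : countType) (adj : rel V)
  (adj_sym : symmetric adj) (adj_irr : irreflexive adj)
  (G : V -> group) (S : forall v, seq (G v))
  (S_inv : forall v (s : G v), List.In s (S v) -> List.In (ginv s) (S v))
  (S_1 : forall v, ~ List.In (gone (G v)) (S v))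
  (S_gen : forall v (g : G v), exists l : seq (G v),
       (forall s, List.In s l -> List.In s (S v)) /\
       g = foldr (@gmul (G v)) (gone (G v)) l)
  (wbar : V -> nat) (wbar_inj : injective wbar) (wbar_pos : forall v, (0 < wbar v)%N)
  (wbar_onto : (~ exists s : seq V, forall v, v \in s) ->
       forall n : nat, (0 < n)%N -> exists v, wbar v = n)
  (R : realType) (r : R) (r_pos : 0 < r) :
  (forall g : word G, exists x b : word G,
      permissible adj wbar r x /\ in_sub_r adj wbar r b /\ gp_eq adj g (wmul x b)) /\
  (forall x x' b b' : word G,
      permissible adj wbar r x -> permissible adj wbar r x' -> ~ gp_eq adj x x' ->
      in_sub_r adj wbar r b -> in_sub_r adj wbar r b' ->
      dist_gt adj wbar S (wmul x b) (wmul x' b') r).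
Proof.
split; first exact: exists_permissible_decomposition.
by move=> x x' b b'; apply: permissible_far.
Qed.
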